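(* Let $K\ge 2$, let $m_1<\cdots<m_K$ be pairwise co-prime positive integers, $M$ a positive integer and $M_k=Mm_k$. Let $N_1,N_2$ be nonnegative integers, $r_{l,k}=\langle N_l\rangle_{M_k}$, $r_l^c=\langle N_l\rangle_M$, and $\tilde r_{l,k}=r_{l,k}+\Delta r_{l,k}$ ($l=1,2$, $k=1,\ldots,K$) with integer errors $\Delta r_{l,k}$; let $\tau=\max_{l,k}|\Delta r_{l,k}|$ and $\tilde r^c_{l,k}=\langle\tilde r_{l,k}\rangle_M$. Sort the $2K$ numbers $\tilde r^c_{l,k}$ (with multiplicity) as $s_1\le\cdots\le s_{2K}$, put $D_k=s_{k+1}-s_k$ ($1\le k\le 2K-1$), $D_{2K}=s_1-s_{2K}+M$; assume $\tau<M/8$, so that there is a unique $k_0\in\{1,\ldots,K\}$ with $D_{k_0}+D_{k_0+K}>M/2$, and define the multisets $\Omega_1=\{s_{k_0+1},\ldots,s_{k_0+K}\}$ and $\Omega_2=\{s_1,\ldots,s_K\}$ if $k_0=K$, $\Omega_2=\{s_{k_0+K+1}-M,\ldots,s_{2K}-M,s_1,\ldots,s_{k_0}\}$ if $k_0\neq K$. If in addition $M/4\le|d_M(r_1^c,r_2^c)|\le M/2$, then for every $k\in\{1,\ldots,K\}$ there exist $\omega\in\Omega_1$ and $\upsilon\in\Omega_2$ such that either $$d_M(\tilde r^c_{1,k},\omega)=0\ \text{ and }\ d_M(\tilde r^c_{2,k},\upsilon)=0,$$ or $$d_M(\tilde r^c_{2,k},\omega)=0\ \text{ and }\ d_M(\tilde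 r^c_{1,k},\upsilon)=0.$$
   Context: For a positive integer $n$ and an integer $x$, $\langle x\rangle_n$ is the unique element of $\{0,\ldots,n-1\}$ congruent to $x$ modulo $n$. For real $x$, $[x]$ denotes the rounding integer, i.e. the integer with $-1/2\le x-[x]<1/2$. For reals $x,y$ and $C>0$, the circular distance is $d_C(x,y)=x-y-\left[\frac{x-y}{C}\right]C$; in particular $d_C(x,y)=0$ iff $x-y$ is an integer multiple of $C$. *)

From Stdlib Require Import Reals Lra Lia ZArith Arith List Permutation Sorting.Sorted.
Import ListNotations.
Open Scope Z_scope.

Definition modrep (x n : Z) : Z := x mod n.

(* rounding integer [x]: the integer z with -1/2 <= x - z < 1/2, i.e. floor(x + 1/2). *)
Definition round_R (x : R) : Z := Int_part (x + / 2)%R.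

Definition dC (C x y : R) : R := (x - y - IZR (round_R ((x - y) / C)) * C)%R.

Definition Nsel (N1 N2 : Z) (l : nat) : Z := if Nat.eqb l 1 then N1 else N2.

Definition r_lk (M : Z) (m : nat -> Z) (N1 N2 : Z) (l k : nat) : Z :=
  modrep (Nsel N1 N2 l) (M * m k).

Definition rc_l (M N1 N2 : Z) (l : nat) : Z := modrep (Nsel N1 N2 l) M.

Definition rt_lk (M : Z) (m : nat -> Z) (N1 N2 : Z) (Delta : nat -> nat -> Z)
  (l k : nat) : Z := r_lk M m N1 N2 l k + Delta l k.

Definition rtc_lk (M : Z) (m : nat -> Z) (N1 N2 : Z) (Delta : nat -> nat -> Z)
  (l k : nat) : Z := modrep (rt_lk M m N1 N2 Delta l k) M.

Definition all_rtc (K : nat) (M : Z) (m : nat -> Z) (N1 N2 : Z)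
  (Delta : nat -> nat -> Z) : list Z :=
  flat_map (fun k => [rtc_lk M m N1 N2 Delta 1 k; rtc_lk M m N1 N2 Delta 2 k])
    (seq 1 K).

(* 1-based access s_i *)
Definition sidx (s : list Z) (i : nat) : Z := nth (i - 1) s 0.

Definition Dgap (K : nat) (M : Z) (s : list Z) (i : nat) : Z :=
  if Nat.eqb i (2 * K) then sidx s 1 - sidx s (2 * K) + M
  else sidx s (i + 1) - sidx s i.

Definition Omega1 (K : nat) (s : list Z) (k0 : nat) : list Z :=
  map (sidx s) (seq (k0 + 1) K).

Definition Omega2 (K : nat) (M : Z) (s : list Z) (k0 : nat) : list Z :=
  if Nat.eqb k0 K then map (sidx s) (seq 1 K)
  else map (fun i => sidx s i - M) (seq (k0 + K + 1) (K - k0))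
       ++ map (sidx s) (seq 1 k0).

(* Every r~^c_{1,k} lies within tau of r_1^c modulo M, and every r~^c_{2,k} within tau of
   r_2^c; as these centers are at least M/4 apart and tau < M/8, the two clusters are
   disjoint arcs of the circle Z/MZ of width at most 2 tau.  On the sorted list s one
   cluster therefore occupies a block of K consecutive indices s_{q+1}, ..., s_{q+K}, while
   the other wraps around.  Any other k0 would have both gaps D_{k0} and D_{k0+K} inside a
   cluster, with sum at most 4 tau < M/2; hence k0 = q, Omega_1 is the block cluster and
   Omega_2 lists the other cluster (shifted by -M where it wraps). *)

From Stdlib Require Import Reals ZArith Arith List Permutation Sorting.Sorted Wf_nat Bool Lia Lra.
Import ListNotations.
Open Scope Z_scope.

Lemma round_R_IZR (j : Z) : round_R (IZR j) = j.
Proof.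
  unfold round_R, Int_part.
  rewrite <- (tech_up _ (j + 1)); [lia | |]; rewrite plus_IZR; lra.
Qed.

Lemma dC_eq0 (M x y j : Z) : M <> 0 -> x - y = j * M -> dC (IZR M) (IZR x) (IZR y) = 0%R.
Proof.
  intros HM Hxy. unfold dC.
  assert (E : (IZR x - IZR y = IZR j * IZR M)%R)
    by (rewrite <- minus_IZR, <- mult_IZR; f_equal; exact Hxy).
  assert (IZR M <> 0%R) by (apply not_0_IZR; exact HM).
  replace ((IZR x - IZR y) / IZR M)%R with (IZR j) by (rewrite E; field; auto).
  rewrite round_R_IZR, E. ring.
Qed.

(* [dC] rounds [(a - b)/M] to the nearest integer, so a lower bound on [|dC|]
   bounds the distance of [a - b] to every multiple of [M]. *)
Lemma dC_lower_bound_all_multiples (M a b : Z) : 0 < M ->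
  (IZR M / 4 <= Rabs (dC (IZR M) (IZR a) (IZR b)))%R ->
  forall j, M <= 4 * Z.abs (a - b - j * M).
Proof.
  intros HM Hd j.
  set (z := ((IZR a - IZR b) / IZR M)%R).
  set (r := round_R z).
  assert (HMr : (0 < IZR M)%R) by (apply IZR_lt; exact HM).
  destruct (base_Int_part (z + / 2)) as [B1 B2].
  fold (round_R z) r in B1, B2.
  assert (Hr_le : (IZR r * IZR M <= IZR a - IZR b + IZR M / 2)%R).
  { replace (IZR a - IZR b + IZR M / 2)%R with ((z + / 2) * IZR M)%R
      by (unfold z; field; lra).
    apply Rmult_le_compat_r; lra. }
  assert (Hr_gt : (IZR r * IZR M > IZR a - IZR b - IZR M / 2)%R).
  { replace (IZR a - IZR b - IZR M / 2)%R with ((z - / 2) * IZR M)%R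
      by (unfold z; field; lra).
    apply Rmult_gt_compat_r; lra. }
  assert (Hr_upper : 2 * (r * M) <= 2 * (a - b) + M).
  { apply le_IZR. rewrite !plus_IZR, !mult_IZR, minus_IZR. lra. }
  assert (Hr_lower : 2 * (r * M) > 2 * (a - b) - M).
  { apply Z.lt_gt, lt_IZR. rewrite !minus_IZR, !mult_IZR, minus_IZR. lra. }
  assert (Hr_far : M <= 4 * Z.abs (a - b - r * M)).
  { apply le_IZR. rewrite mult_IZR, <- Rabs_Zabs, !minus_IZR, mult_IZR.
    unfold dC in Hd. fold z r in Hd. lra. }
  destruct (Z.lt_total j r) as [Hj | [Hj | Hj]].
  - assert (j * M <= r * M - M) by nia. lia.
  - subst. exact Hr_far.
  - assert (j * M >= r * M + M) by nia. lia.
Qed.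

Section Near.

Variables M tau : Z.
Hypotheses (Htau0 : 0 <= tau) (HtauM : 8 * tau < M).

Definition near (c v : Z) : Prop := exists j, Z.abs (v - c - j * M) <= tau.

Definition nearb (c v : Z) : bool := (v - c + tau) mod M <=? 2 * tau.

Lemma nearbP (c v : Z) : nearb c v = true <-> near c v.
Proof.
  unfold nearb, near. rewrite Z.leb_le. split.
  - intros H. exists ((v - c + tau) / M).
    pose proof (Z.div_mod (v - c + tau) M ltac:(lia)).
    pose proof (Z.mod_pos_bound (v - c + tau) M ltac:(lia)). lia.
  - intros [j Hj].
    replace (v - c + tau) with ((v - c - j * M + tau) + j * M) by lia.
    rewrite Z.mod_add, Z.mod_small by lia. lia.
Qed.

Lemma near_disjoint (c1 c2 v : Z) : (forall j, M <= 4 * Z.abs (c1 - c2 - j * M)) ->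
  near c1 v -> near c2 v -> False.
Proof.
  intros Hsep [j1 H1] [j2 H2]. specialize (Hsep (j2 - j1)). lia.
Qed.

(* The second alternative is a pair straddling the wrap point M = 0. *)
Lemma near_pair_arc (c x y : Z) : 0 <= x <= y -> y < M -> near c x -> near c y ->
  (y - x <= 2 * tau /\ forall v, x <= v <= y -> near c v) \/
  (M - 2 * tau <= y - x /\ forall v, 0 <= v < M -> v <= x \/ y <= v -> near c v).
Proof.
  intros Hx Hy [a Ha] [b Hb].
  assert (Hba : b = a \/ b = a + 1).
  { destruct (Z.lt_total b a) as [L | [L | L]].
    - assert (b * M <= a * M - M) by nia. lia.
    - lia.
    - destruct (Z.eq_dec b (a + 1)); [lia |].
      assert (b * M >= a * M + 2 * M) by nia. lia. }
  destruct Hba; subst b.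
  - left. split; [lia |]. intros v Hv. exists a. lia.
  - right. split; [lia |]. intros v Hv [Hvx | Hvy].
    + exists a. lia.
    + exists (a + 1). lia.
Qed.

End Near.

Lemma rtc_lk_near (M : Z) (m : nat -> Z) (N1 N2 : Z) (Delta : nat -> nat -> Z) (l k : nat) (tau : Z) :
  0 < M -> 0 < m k -> Z.abs (Delta l k) <= tau ->
  near M tau (rc_l M N1 N2 l) (rtc_lk M m N1 N2 Delta l k).
Proof.
  intros HM Hm HD. unfold near, rtc_lk, rt_lk, r_lk, rc_l, modrep.
  set (N := Nsel N1 N2 l). set (D := Delta l k).
  pose proof (Z.div_mod N (M * m k) ltac:(nia)).
  pose proof (Z.div_mod N M ltac:(lia)).
  pose proof (Z.div_mod (N mod (M * m k) + D) M ltac:(lia)).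
  exists (N / M - m k * (N / (M * m k)) - (N mod (M * m k) + D) / M). nia.
Qed.

Lemma rtc_lk_range (M : Z) (m : nat -> Z) (N1 N2 : Z) (Delta : nat -> nat -> Z) (l k : nat) :
  0 < M -> 0 <= rtc_lk M m N1 N2 Delta l k < M.
Proof. intros. unfold rtc_lk, modrep. apply Z.mod_pos_bound. lia. Qed.

Lemma Sorted_nth_le (s : list Z) : Sorted Z.le s ->
  forall i j, (i <= j < length s)%nat -> nth i s 0 <= nth j s 0.
Proof.
  intros HS. apply Sorted_StronglySorted in HS; [| intros x y z; lia].
  induction HS as [| a s _ IH HF]; intros i j Hij; simpl in *; [lia |].
  destruct i, j; try lia.
  - rewrite Forall_forall in HF. apply HF, nth_In. lia.
  - apply IH. lia.
Qed.

Lemma Permutation_filter_length {A : Type} (f : A -> bool) (l l' : list A) :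
  Permutation l l' -> length (filter f l) = length (filter f l').
Proof.
  intros P. induction P; simpl; try lia.
  - destruct (f x); simpl; lia.
  - destruct (f x), (f y); simpl; lia.
Qed.

Lemma filter_length_nth (f : Z -> bool) (s : list Z) :
  length (filter f s) = length (filter (fun i => f (nth i s 0)) (seq 0 (length s))).
Proof.
  induction s as [| a s IH]; simpl; auto.
  rewrite <- seq_shift, filter_map_swap.
  destruct (f a); simpl; rewrite length_map, IH; reflexivity.
Qed.

Lemma filter_interval_length (q r n : nat) : (q <= r + 1)%nat ->
  length (filter (fun i => (q <=? i) && (i <=? r))%nat (seq 0 n)) = (Nat.min n (r + 1) - q)%nat.
Proof.
  intros Hqr. induction n.
  - simpl. lia.
  - rewrite seq_S, filter_app, length_app, IHn. cbn [filter Nat.add].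
    destruct (Nat.leb_spec q n), (Nat.leb_spec n r); cbn [andb length]; lia.
Qed.

Lemma filter_block_length (f : Z -> bool) (s : list Z) (q r : nat) :
  (q <= r + 1)%nat -> (r < length s)%nat ->
  (forall i, (i < length s)%nat -> f (nth i s 0) = true <-> (q <= i <= r)%nat) ->
  length (filter f s) = (r + 1 - q)%nat.
Proof.
  intros Hqr Hr Hf. rewrite filter_length_nth.
  rewrite (filter_ext_in _ (fun i => (q <=? i) && (i <=? r))%nat).
  - rewrite filter_interval_length; lia.
  - intros i Hi. apply in_seq in Hi.
    apply eq_true_iff_eq. rewrite andb_true_iff, !Nat.leb_le, Hf; [tauto | lia].
Qed.

Lemma least_index (f : nat -> bool) (n : nat) : (exists l, (l < n)%nat /\ f l = true) ->
  exists q, (q < n)%nat /\ f q = true /\ forall l, (l < q)%nat -> f l = false.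
Proof.
  intros Hex.
  destruct (dec_inh_nat_subset_has_unique_least_element (fun l => (l < n)%nat /\ f l = true))
    as [q [[[Hq Hfq] Hmin] _]].
  - intros l. destruct (Nat.lt_ge_cases l n), (f l); intuition (try lia; discriminate).
  - exact Hex.
  - exists q. repeat split; auto. intros l Hl. destruct (f l) eqn:E; auto.
    specialize (Hmin l ltac:(split; [lia | exact E])). lia.
Qed.

Lemma greatest_index (f : nat -> bool) (n : nat) : (exists l, (l < n)%nat /\ f l = true) ->
  exists r, (r < n)%nat /\ f r = true /\ forall l, (r < l < n)%nat -> f l = false.
Proof.
  intros [l [Hl Hfl]].
  destruct (least_index (fun d => f (n - 1 - d)%nat) n) as [d [Hd [Hfd Hmin]]].
  - exists (n - 1 - l)%nat. split; [lia |]. now replace (n - 1 - (n - 1 - l))%nat with l by lia.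
  - exists (n - 1 - d)%nat. repeat split; [lia | exact Hfd |].
    intros l' Hl'. specialize (Hmin (n - 1 - l')%nat ltac:(lia)).
    now replace (n - 1 - (n - 1 - l'))%nat with l' in Hmin by lia.
Qed.

Section SortedClusters.

Variables (M tau c1 c2 : Z) (s : list Z).
Hypotheses (Htau0 : 0 <= tau) (HtauM : 8 * tau < M)
  (Hsep : forall j, M <= 4 * Z.abs (c1 - c2 - j * M))
  (Hsorted : Sorted Z.le s)
  (Hrange : forall v, In v s -> 0 <= v < M)
  (Hcover : forall v, In v s -> near M tau c1 v \/ near M tau c2 v).

Local Notation color := (nearb M tau c1).
Local Notation t i := (nth i s 0).

Lemma color_near (v : Z) : In v s -> near M tau (if color v then c1 else c2) v.
Proof.
  intros Hv. destruct (color v) eqn:E; [now apply (nearbP M tau Htau0 HtauM) |].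
  destruct (Hcover v Hv) as [H | H]; [| exact H].
  apply (nearbP M tau Htau0 HtauM) in H; congruence.
Qed.

Lemma near_color (v : Z) (b : bool) : near M tau (if b then c1 else c2) v -> color v = b.
Proof.
  destruct b; intros H; [now apply (nearbP M tau Htau0 HtauM) |].
  destruct (color v) eqn:E; [| reflexivity].
  apply (nearbP M tau Htau0 HtauM) in E. destruct (near_disjoint M tau Htau0 HtauM c1 c2 v Hsep E H).
Qed.

Lemma same_color_arc (i j : nat) (b : bool) : (i <= j < length s)%nat ->
  color (t i) = b -> color (t j) = b ->
  (t j - t i <= 2 * tau /\ forall l, (i <= l <= j)%nat -> color (t l) = b) \/
  (M - 2 * tau <= t j - t i /\
   forall l, (l < length s)%nat -> (l <= i \/ j <= l)%nat -> color (t l) = b).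
Proof.
  intros Hij Ei Ej.
  assert (Hin : forall l, (l < length s)%nat -> In (t l) s) by (intros; apply nth_In; lia).
  assert (Ci := color_near (t i) (Hin i ltac:(lia))).
  assert (Cj := color_near (t j) (Hin j ltac:(lia))).
  rewrite Ei in Ci. rewrite Ej in Cj.
  pose proof (Hrange _ (Hin i ltac:(lia))). pose proof (Hrange _ (Hin j ltac:(lia))).
  pose proof (Sorted_nth_le s Hsorted i j Hij).
  destruct (near_pair_arc M tau Htau0 HtauM _ (t i) (t j) ltac:(lia) ltac:(lia) Ci Cj)
    as [[Hclose Hbetween] | [Hfar Houtside]].
  - left. split; [exact Hclose |]. intros l Hl. apply near_color, Hbetween.
    split; apply Sorted_nth_le; auto; lia.
  - right. split; [exact Hfar |]. intros l Hl Hside. apply near_color, Houtside.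
    + apply Hrange, Hin, Hl.
    + destruct Hside; [left | right]; apply Sorted_nth_le; auto; lia.
Qed.

Hypothesis Hbicolored : forall b, exists i, (i < length s)%nat /\ color (t i) = b.

Lemma not_monochromatic (b : bool) :
  ~ (forall l, (l < length s)%nat -> color (t l) = b).
Proof.
  intros Hmono. destruct (Hbicolored (negb b)) as [i [Hi Ei]].
  rewrite Hmono in Ei by exact Hi. now destruct b.
Qed.

Lemma same_color_gap (i : nat) : (i + 1 < length s)%nat ->
  color (t i) = color (t (i + 1)%nat) -> t (i + 1)%nat - t i <= 2 * tau.
Proof.
  intros Hi E.
  destruct (same_color_arc i (i + 1) (color (t i)) ltac:(lia) eq_refl (eq_sym E))
    as [[Hgap _] | [_ Hall]]; [exact Hgap |].
  destruct (not_monochromatic (color (t i))). intros l Hl. apply Hall; lia.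
Qed.

Lemma same_color_wrap_gap : (0 < length s)%nat ->
  color (t 0%nat) = color (t (length s - 1)%nat) -> t 0%nat - t (length s - 1)%nat + M <= 2 * tau.
Proof.
  intros Hn E.
  destruct (same_color_arc 0 (length s - 1) (color (t 0%nat)) ltac:(lia) eq_refl (eq_sym E))
    as [[_ Hall] | [Hfar _]]; [| lia].
  destruct (not_monochromatic (color (t 0%nat))). intros l Hl. apply Hall; lia.
Qed.

Lemma color_block : exists q r, (1 <= q <= r)%nat /\ (r < length s)%nat /\
  forall l, (l < length s)%nat -> color (t l) = negb (color (t 0%nat)) <-> (q <= l <= r)%nat.
Proof.
  set (b := negb (color (t 0%nat))).
  assert (Hex : exists l, (l < length s)%nat /\ Bool.eqb (color (t l)) b = true).
  { destruct (Hbicolored b) as [i [Hi Ei]]. exists i. rewrite Ei, eqb_reflx. auto. }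
  destruct (least_index _ _ Hex) as [q [Hq [Eq Hbefore]]].
  destruct (greatest_index _ _ Hex) as [r [Hr [Er Hafter]]].
  apply eqb_prop in Eq, Er.
  assert (Hq1 : q <> 0%nat) by (intros ->; unfold b in Eq; now destruct (color (t 0%nat))).
  assert (Hqr : (q <= r)%nat).
  { destruct (Nat.le_gt_cases q r) as [| Hrq]; [assumption |].
    specialize (Hafter q ltac:(lia)). now rewrite Eq, eqb_reflx in Hafter. }
  exists q, r. split; [lia |]. split; [exact Hr |].
  destruct (same_color_arc q r b ltac:(lia) Eq Er) as [[_ Hbetween] | [_ Houtside]].
  - intros l Hl. split; [| apply Hbetween].
    intros El. destruct (Nat.lt_ge_cases l q) as [Hlq | Hlq].
    + specialize (Hbefore l Hlq). now rewrite El, eqb_reflx in Hbefore.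
    + destruct (Nat.le_gt_cases l r) as [| Hlr]; [lia |].
      specialize (Hafter l ltac:(lia)). now rewrite El, eqb_reflx in Hafter.
  - specialize (Houtside 0%nat ltac:(lia) ltac:(lia)).
    unfold b in Houtside. now destruct (color (t 0%nat)).
Qed.

Lemma Dgap_off_block_le (K q k : nat) : length s = (2 * K)%nat -> (1 <= q <= K)%nat ->
  (forall l, (l < length s)%nat ->
     color (t l) = negb (color (t 0%nat)) <-> (q <= l < q + K)%nat) ->
  (1 <= k <= K)%nat -> k <> q -> Dgap K M s k + Dgap K M s (k + K) <= 4 * tau.
Proof.
  intros Hlen Hq Hblock Hk Hkq.
  assert (Hsame : forall i j, (i < 2 * K)%nat -> (j < 2 * K)%nat ->
            ((q <= i < q + K)%nat <-> (q <= j < q + K)%nat) ->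
            color (t i) = color (t j)).
  { intros i j Hi Hj Hij. rewrite Hlen in Hblock.
    pose proof (Hblock i Hi). pose proof (Hblock j Hj).
    destruct (color (t i)), (color (t j)), (color (t 0%nat)); simpl in *; intuition congruence. }
  assert (Hinner : forall i, (1 <= i < 2 * K)%nat ->
            ((q <= i - 1 < q + K)%nat <-> (q <= i < q + K)%nat) ->
            Dgap K M s i <= 2 * tau).
  { intros i Hi Hside. unfold Dgap, sidx.
    destruct (Nat.eqb_spec i (2 * K)) as [| _]; [lia |].
    replace (i + 1 - 1)%nat with ((i - 1) + 1)%nat by lia.
    apply same_color_gap; [lia |]. replace (i - 1 + 1)%nat with i by lia.
    apply Hsame; lia. }
  assert (Hfirst : Dgap K M s k <= 2 * tau) by (apply Hinner; lia).
  assert (Hsecond : Dgap K M s (k + K) <= 2 * tau).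
  { destruct (Nat.eq_dec k K) as [-> | HkK]; [| apply Hinner; lia].
    unfold Dgap, sidx. replace (K + K)%nat with (2 * K)%nat by lia. rewrite Nat.eqb_refl.
    replace (1 - 1)%nat with 0%nat by lia. replace (2 * K - 1)%nat with (length s - 1)%nat by lia.
    apply same_color_wrap_gap; [lia |]. apply Hsame; lia. }
  lia.
Qed.

End SortedClusters.

Lemma flat_map_pair_filter_length (f : Z -> bool) (g1 g2 : nat -> Z) (st n : nat) :
  (forall k, (st <= k < st + n)%nat -> f (g1 k) = negb (f (g2 k))) ->
  length (filter f (flat_map (fun k => [g1 k; g2 k]) (seq st n))) = n.
Proof.
  revert st; induction n as [| n IH]; intros st Hf; simpl; [reflexivity |].
  rewrite (Hf st ltac:(lia)).
  destruct (f (g2 st)); simpl; rewrite IH by (intros; apply Hf; lia); reflexivity.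
Qed.

Lemma in_all_rtc (K : nat) (M : Z) (m : nat -> Z) (N1 N2 : Z) (Delta : nat -> nat -> Z) (v : Z) :
  In v (all_rtc K M m N1 N2 Delta) <->
  exists k, (1 <= k <= K)%nat /\
    (v = rtc_lk M m N1 N2 Delta 1 k \/ v = rtc_lk M m N1 N2 Delta 2 k).
Proof.
  unfold all_rtc. rewrite in_flat_map. split.
  - intros [k [Hk Hv]]. apply in_seq in Hk. exists k. split; [lia |].
    simpl in Hv. intuition.
  - intros [k [Hk Hv]]. exists k. split; [apply in_seq; lia |]. simpl. intuition.
Qed.

Lemma all_rtc_length (K : nat) (M : Z) (m : nat -> Z) (N1 N2 : Z) (Delta : nat -> nat -> Z) :
  length (all_rtc K M m N1 N2 Delta) = (2 * K)%nat.
Proof.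
  unfold all_rtc. rewrite (flat_map_constant_length (c := 2%nat)); [| reflexivity].
  rewrite length_seq. lia.
Qed.

Lemma block_witnesses (K : nat) (M : Z) (s : list Z) (q i j : nat) :
  M <> 0 -> (1 <= q <= K)%nat -> (j < 2 * K)%nat ->
  (q <= i < q + K)%nat -> ~ (q <= j < q + K)%nat ->
  exists omega upsilon, In omega (Omega1 K s q) /\ In upsilon (Omega2 K M s q) /\
    dC (IZR M) (IZR (nth i s 0)) (IZR omega) = 0%R /\
    dC (IZR M) (IZR (nth j s 0)) (IZR upsilon) = 0%R.
Proof.
  intros HM Hq Hj Hi Hnj.
  assert (Hsidx : forall l, sidx s (l + 1) = nth l s 0)
    by (intros l; unfold sidx; f_equal; lia).
  assert (Hdiag : forall x, dC (IZR M) (IZR x) (IZR x) = 0%R)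
    by (intros x; apply (dC_eq0 M x x 0); lia).
  exists (nth i s 0).
  assert (HO1 : In (nth i s 0) (Omega1 K s q)).
  { unfold Omega1. rewrite <- Hsidx. apply in_map, in_seq. lia. }
  unfold Omega2. destruct (Nat.eqb_spec q K) as [-> | HqK].
  - exists (nth j s 0). repeat split; auto.
    rewrite <- Hsidx. apply in_map, in_seq. lia.
  - destruct (Nat.lt_ge_cases j q).
    + exists (nth j s 0). repeat split; auto.
      apply in_or_app. right. rewrite <- Hsidx. apply in_map, in_seq. lia.
    + exists (nth j s 0 - M). repeat split; auto.
      * apply in_or_app. left. rewrite <- Hsidx.
        apply (in_map (fun l => sidx s l - M)), in_seq. lia.
      * apply (dC_eq0 M _ _ 1); lia.
Qed.

Section Corollary.

Variables (K : nat) (m : nat -> Z) (M N1 N2 tau : Z) (Delta : nat -> nat -> Z) (s : list Z).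
Hypotheses (HK : (1 <= K)%nat) (Hmpos : forall k, (1 <= k <= K)%nat -> 0 < m k)
  (Htau0 : 0 <= tau) (HtauM : 8 * tau < M)
  (HDelta : forall l k, (1 <= l <= 2)%nat -> (1 <= k <= K)%nat -> Z.abs (Delta l k) <= tau)
  (Hdist : (IZR M / 4 <= Rabs (dC (IZR M) (IZR (rc_l M N1 N2 1)) (IZR (rc_l M N1 N2 2))))%R)
  (Hsperm : Permutation s (all_rtc K M m N1 N2 Delta))
  (Hsorted : Sorted Z.le s).

Local Notation c1 := (rc_l M N1 N2 1).
Local Notation c2 := (rc_l M N1 N2 2).
Local Notation rt := (rtc_lk M m N1 N2 Delta).
Local Notation color := (nearb M tau c1).

Lemma residues_separated : forall j, M <= 4 * Z.abs (c1 - c2 - j * M).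
Proof. apply dC_lower_bound_all_multiples; [lia | exact Hdist]. Qed.

Lemma rtc_near_residue (l k : nat) : (1 <= l <= 2)%nat -> (1 <= k <= K)%nat ->
  near M tau (rc_l M N1 N2 l) (rt l k).
Proof. intros Hl Hk. apply rtc_lk_near; auto; lia. Qed.

Lemma rtc_color (k : nat) : (1 <= k <= K)%nat ->
  color (rt 1%nat k) = true /\ color (rt 2%nat k) = false.
Proof.
  intros Hk.
  split; apply (near_color M tau c1 c2 Htau0 HtauM residues_separated), rtc_near_residue; lia.
Qed.

Lemma in_sorted_rtc (v : Z) :
  In v s <-> exists k, (1 <= k <= K)%nat /\ (v = rt 1%nat k \/ v = rt 2%nat k).
Proof.
  rewrite <- (in_all_rtc K M m N1 N2 Delta v).
  split; apply Permutation_in; auto using Permutation_sym.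
Qed.

Lemma sorted_rtc_length : length s = (2 * K)%nat.
Proof. rewrite (Permutation_length Hsperm). apply all_rtc_length. Qed.

Lemma sorted_rtc_index (l k : nat) : (l = 1 \/ l = 2)%nat -> (1 <= k <= K)%nat ->
  exists i, (i < length s)%nat /\ nth i s 0 = rt l k.
Proof.
  intros Hl Hk. apply In_nth, in_sorted_rtc. exists k. split; [exact Hk |].
  destruct Hl as [-> | ->]; auto.
Qed.

Lemma sorted_rtc_range (v : Z) : In v s -> 0 <= v < M.
Proof. intros [k [Hk [-> | ->]]]%in_sorted_rtc; apply rtc_lk_range; lia. Qed.

Lemma sorted_rtc_cover (v : Z) : In v s -> near M tau c1 v \/ near M tau c2 v.
Proof.
  intros [k [Hk [-> | ->]]]%in_sorted_rtc; [left | right]; apply rtc_near_residue; lia.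
Qed.

Lemma sorted_rtc_bicolored (b : bool) : exists i, (i < length s)%nat /\ color (nth i s 0) = b.
Proof.
  destruct (sorted_rtc_index (if b then 1 else 2)%nat 1%nat) as [i [Hi Ei]];
    [destruct b; auto | lia |].
  exists i. rewrite Ei. split; [exact Hi |]. destruct b; apply rtc_color; lia.
Qed.

Lemma sorted_rtc_block : exists q, (1 <= q <= K)%nat /\
  forall l, (l < length s)%nat ->
    color (nth l s 0) = negb (color (nth 0 s 0)) <-> (q <= l < q + K)%nat.
Proof.
  destruct (color_block M tau c1 c2 s Htau0 HtauM residues_separated Hsorted
              sorted_rtc_range sorted_rtc_cover sorted_rtc_bicolored)
    as (q & r & Hqr & Hr & Hblock).
  set (b := negb (color (nth 0 s 0))) in Hblock.
  (* Each pair of residues with the same k has one point of each color, so the block has K points. *)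
  assert (HrK : (r + 1 - q)%nat = K).
  { rewrite <- (filter_block_length (fun v => Bool.eqb (color v) b) s q r) by
      (try lia; intros i Hi; rewrite eqb_true_iff; apply Hblock, Hi).
    rewrite (Permutation_filter_length _ _ _ Hsperm).
    apply flat_map_pair_filter_length. intros k Hk.
    destruct (rtc_color k ltac:(lia)) as [-> ->]. now destruct b. }
  exists q. pose proof sorted_rtc_length. split; [lia |].
  intros l Hl. apply (iff_trans (Hblock l Hl)). lia.
Qed.

Lemma large_gap_at_block_start (q k0 : nat) : (1 <= q <= K)%nat ->
  (forall l, (l < length s)%nat ->
     color (nth l s 0) = negb (color (nth 0 s 0)) <-> (q <= l < q + K)%nat) ->
  (1 <= k0 <= K)%nat -> (2 * (Dgap K M s k0 + Dgap K M s (k0 + K)) > M)%Z -> k0 = q.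
Proof.
  intros Hq Hblock Hk0 Hgap. destruct (Nat.eq_dec k0 q) as [| Hne]; [assumption |].
  pose proof (Dgap_off_block_le M tau c1 c2 s Htau0 HtauM residues_separated Hsorted
                sorted_rtc_range sorted_rtc_cover sorted_rtc_bicolored
                K q k0 sorted_rtc_length Hq Hblock Hk0 Hne).
  lia.
Qed.

Lemma sorted_rtc_Omega_witnesses (k0 : nat) : (1 <= k0 <= K)%nat ->
  (2 * (Dgap K M s k0 + Dgap K M s (k0 + K)) > M)%Z ->
  forall k, (1 <= k <= K)%nat ->
    exists omega upsilon,
      In omega (Omega1 K s k0) /\ In upsilon (Omega2 K M s k0) /\
      ((dC (IZR M) (IZR (rt 1%nat k)) (IZR omega) = 0%R /\
        dC (IZR M) (IZR (rt 2%nat k)) (IZR upsilon) = 0%R)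
       \/
       (dC (IZR M) (IZR (rt 2%nat k)) (IZR omega) = 0%R /\
        dC (IZR M) (IZR (rt 1%nat k)) (IZR upsilon) = 0%R)).
Proof.
  intros Hk0 Hk0gap k Hk.
  destruct sorted_rtc_block as (q & Hq & Hblock).
  rewrite (large_gap_at_block_start q k0 Hq Hblock Hk0 Hk0gap).
  destruct (sorted_rtc_index 1 k) as [i1 [Hi1 E1]]; [auto | exact Hk |].
  destruct (sorted_rtc_index 2 k) as [i2 [Hi2 E2]]; [auto | exact Hk |].
  destruct (rtc_color k Hk) as [C1 C2]. rewrite <- E1 in C1 |- *. rewrite <- E2 in C2 |- *.
  pose proof sorted_rtc_length as Hlen.
  destruct (color (nth 0 s 0)) eqn:E0; cbn [negb] in Hblock.
  - destruct (block_witnesses K M s q i2 i1) as (omega & upsilon & ?); try lia.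
    + apply (Hblock i2 Hi2), C2.
    + intros Hi1q. apply (Hblock i1 Hi1) in Hi1q. congruence.
    + exists omega, upsilon. tauto.
  - destruct (block_witnesses K M s q i1 i2) as (omega & upsilon & ?); try lia.
    + apply (Hblock i1 Hi1), C1.
    + intros Hi2q. apply (Hblock i2 Hi2) in Hi2q. congruence.
    + exists omega, upsilon. tauto.
Qed.

End Corollary.
Theorem corollary2
  (K : nat) (m : nat -> Z) (M N1 N2 : Z) (Delta : nat -> nat -> Z)
  (s : list Z) (k0 : nat)
  (HK : (2 <= K)%nat)
  (Hmpos : forall k, (1 <= k <= K)%nat -> (0 < m k)%Z)
  (Hmincr : forall k, (1 <= k < K)%nat -> (m k < m (S k))%Z)
  (Hcop : forall i j, (1 <= i <= K)%nat -> (1 <= j <= K)%nat -> i <> j ->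
            Z.gcd (m i) (m j) = 1%Z)
  (HM : (0 < M)%Z)
  (HN1 : (0 <= N1)%Z) (HN2 : (0 <= N2)%Z)
  (Htau : forall l k, (1 <= l <= 2)%nat -> (1 <= k <= K)%nat ->
            (8 * Z.abs (Delta l k) < M)%Z)
  (Hsperm : Permutation s (all_rtc K M m N1 N2 Delta))
  (Hssort : Sorted Z.le s)
  (Hk0 : (1 <= k0 <= K)%nat)
  (Hk0gap : (2 * (Dgap K M s k0 + Dgap K M s (k0 + K)) > M)%Z)
  (Hk0uniq : forall k, (1 <= k <= K)%nat ->
            (2 * (Dgap K M s k + Dgap K M s (k + K)) > M)%Z -> k = k0)
  (Hdist : (IZR M / 4 <= Rabs (dC (IZR M) (IZR (rc_l M N1 N2 1)) (IZR (rc_l M N1 N2 2)))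
            <= IZR M / 2)%R) :
  forall k, (1 <= k <= K)%nat ->
    exists omega upsilon,
      In omega (Omega1 K s k0) /\ In upsilon (Omega2 K M s k0) /\
      ((dC (IZR M) (IZR (rtc_lk M m N1 N2 Delta 1 k)) (IZR omega) = 0%R /\
        dC (IZR M) (IZR (rtc_lk M m N1 N2 Delta 2 k)) (IZR upsilon) = 0%R)
       \/
       (dC (IZR M) (IZR (rtc_lk M m N1 N2 Delta 2 k)) (IZR omega) = 0%R /\
        dC (IZR M) (IZR (rtc_lk M m N1 N2 Delta 1 k)) (IZR upsilon) = 0%R)).
Proof.
  (* Any tau with 8 tau < M bounding the errors will do; take the largest one. *)
  set (tau := (M - 1) / 8).
  assert (Htau0 : 0 <= tau) by (unfold tau; Z.div_mod_to_equations; lia).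
  assert (HtauM : 8 * tau < M) by (unfold tau; Z.div_mod_to_equations; lia).
  assert (HDelta : forall l k, (1 <= l <= 2)%nat -> (1 <= k <= K)%nat -> Z.abs (Delta l k) <= tau)
    by (intros l k Hl Hk; specialize (Htau l k Hl Hk); unfold tau; Z.div_mod_to_equations; lia).
  apply (sorted_rtc_Omega_witnesses K m M N1 N2 tau Delta s); auto; [lia | apply Hdist].
Qed.
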